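(* Let $G$ be a graph, with vertices labelled $1,\dots,n$, and let $F$ be an easy graph fibration with $F(G)\neq\emptyset$. Let $\mathscr{C}=\{(K,\mathbf{a},\mathbf{b})\mid (K,g_{\mathbf{a}}^{-1}g_{\mathbf{b}})\in F\}$ be the associated group-theoretical graph category, and let $\mathbb{G}$ be the orthogonal compact matrix quantum group whose intertwiner spaces are $\mathrm{span}\{T^G_{\mathbf{K}}\mid \mathbf{K}\in\mathscr{C}(k,l)\}$, $k,l\in\mathbb{N}_0$. Then $$\mathbb{G}=\hat\Gamma\rtimes\mathrm{Aut}\,G,\qquad \Gamma=\mathbb{Z}_2^{*V(G)}/F(G).$$
   Context: Graphs are finite, undirected, without multiple edges, loops allowed, up to isomorphism; graph homomorphisms map edges (including loops) to edges. $\mathbb{Z}_2^{*V}$ is the group generated by the set $V$ subject to $v^2=e$; for a tuple $\mathbf{a}$ of elements of $V$, $g_{\mathbf{a}}$ is the product of its entries; maps of sets induce maps on tuples and homomorphisms of these groups. For a partition $\pi$ of $V(K)$, $K/\pi$ has the blocks as vertices with an edge between two (possibly equal) blocks iff $K$ has an edge between some of their elements; $q_\pi$ the quotient map. A vertex overlap of graphs $K,H$ is a subset $f\subset V(K)\times V(H)$ with each vertex occurring at most once; $K\cup_fH$ is the quotient of $K\sqcup H$ identifying $v,w$ for $(v,w)\in f$; $f_K,f_H$ the induced maps. A graph fibration is a set $F$ of pairs $(K,a)$, $a\in\mathbb{Z}_2^{*V(K)}$, up to $(K,a)\equiv(K',\phi(a))$ for isomorphisms $\phi$, with $(N_0,e),(N_1,e)\in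 F$ ($N_k$ the edgeless graph on $k$ vertices), such that: (F1) $F(K):=\{a\mid(K,a)\in F\}$ is empty or a normal subgroup of $\mathbb{Z}_2^{*V(K)}$; (F2) $F(K)$ is invariant under automorphisms of $K$; (F3) $(K,a),(H,b)\in F$ implies $(K\cup_fH,f_K(a)f_H(b))\in F$ for every vertex overlap $f$. It is easy if (F4): $F(K)\ne\emptyset$ implies $q_\pi(F(K))\subset F(K/\pi)$ for every partition $\pi$ of $V(K)$. Bilabelled graph: $\mathbf{K}=(K,\mathbf{a},\mathbf{b})$, $\mathbf{a}\in V(K)^k$, $\mathbf{b}\in V(K)^l$, up to isomorphism; $\mathscr{C}(k,l)$ are those with $k$ inputs and $l$ outputs. For such $\mathbf{K}$, $T^G_{\mathbf{K}}\colon(\mathbb{C}^n)^{\otimes k}\to(\mathbb{C}^n)^{\otimes l}$ has entries $[T^G_{\mathbf{K}}]_{\mathbf{j}\mathbf{i}}=\#\{\phi\colon K\to G \text{ homomorphism}\mid \phi(\mathbf{a})=\mathbf{i},\phi(\mathbf{b})=\mathbf{j}\}$ (the coefficient of $e_{j_1}\otimes\cdots\otimes e_{j_l}$ in the image of $e_{i_1}\otimes\cdots\otimes e_{i_k}$). Quantum groups: an orthogonal compact matrix quantum group is a pair $(A,u)$, $A$ a $*$-algebra generated by the entries of $u\in M_n(A)$, with $u_{ij}=u_{ij}^*$, $uu^t=u^tu=1$, and $u_{ij}\mapsto\sum_k u_{ik}\otimes u_{kj}$ extending to a $*$-homomorphism $A\to A\otimes A$; its intertwiner spaces are $\mathrm{Mor}(u^{\otimes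 k},u^{\otimes l})=\{T\mid Tu^{\otimes k}=u^{\otimes l}T\}$. By Woronowicz–Tannaka–Krein duality such a quantum group is uniquely determined by its intertwiner spaces. A permutation group $H\subset S_n$ is the quantum group $(O(H),v)$ with $v_{ij}(\sigma)=\delta_{i\sigma(j)}$; here $\mathrm{Aut}\,G\subset S_n$ via the labelling. If $\Gamma$ is a quotient of $\mathbb{Z}_2^{*n}$ by an $H$-invariant normal subgroup, with $\gamma_i\in\mathbb{C}\Gamma$ the images of the generators, then $\hat\Gamma\rtimes H$ is the quantum group $(\mathbb{C}\Gamma\otimes O(H),u)$ with $u_{ij}=\gamma_i\otimes v_{ij}$. *)

From mathcomp Require Import all_boot all_algebra all_fingroup.
From mathcomp Require Import complex Rstruct boolp.
Set Implicit Arguments. Unset Strict Implicit. Unset Printing Implicit Defensive.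
Import GRing.Theory Num.Theory.
Local Open Scope ring_scope.

Notation CC := (complex Rdefinitions.R).

(** * Graphs: finite, undirected (symmetric adjacency), loops allowed.
    Vertex set 'I_(gv K); graphs are considered up to isomorphism
    (all notions below are isomorphism invariant). *)
Record graph := Graph { gv : nat; gadj : rel 'I_gv; gsym : symmetric gadj }.

Lemma edgeless_sym k : symmetric (fun _ _ : 'I_k => false). Proof. by []. Qed.
Definition edgeless (k : nat) : graph := @Graph k (fun _ _ => false) (@edgeless_sym k).

Definition is_iso (K K' : graph) (phi : 'I_(gv K) -> 'I_(gv K')) : Prop :=
  bijective phi /\ forall x y, @gadj K x y = @gadj K' (phi x) (phi y).

Definition is_hom (K H : graph) (phi : 'I_(gv K) -> 'I_(gv H)) : bool :=
  [forall x, forall y, @gadj K x y ==> @gadj H (phi x) (phi y)].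

(** * The group Z_2^{*V}: elements are represented by words (seq V),
    a word w standing for the product g_w of its letters; two words
    represent the same group element iff they have the same free
    reduction (cancellation of adjacent equal letters, since v^2 = e). *)
Definition push {V : eqType} (x : V) (s : seq V) : seq V :=
  if s is y :: s' then (if x == y then s' else x :: s) else [:: x].
Definition reduce {V : eqType} (w : seq V) : seq V := foldr push [::] w.
Definition geq {V : eqType} (w w' : seq V) : bool := reduce w == reduce w'.
(* product = concatenation, identity = [::], inverse = reversal *)

Definition normal_subgroup {V : eqType} (S : seq V -> Prop) : Prop :=
  [/\ S [::],
      (forall w w', S w -> S w' -> S (w ++ w')),
      (forall w, S w -> S (rev w)) &
      (forall w x, S w -> S (rev x ++ w ++ x))].

(** L together with a surjection q : V(K) -> V(L) is (a copy
    of) the quotient K/pi by the partition pi = kernel of q, with q the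
    quotient map q_pi. [adj] is an adjacency relation on 'I_m. *)
Definition is_quotient (m : nat) (adj : rel 'I_m) (L : graph)
    (q : 'I_m -> 'I_(gv L)) : Prop :=
  (forall i : 'I_(gv L), exists x, q x = i) /\
  (forall i j, @gadj L i j = [exists x, exists y, [&& q x == i, q y == j & adj x y]]).

Definition dunion_adj (K H : graph) : rel 'I_(gv K + gv H) :=
  fun u v => match split u, split v with
             | inl x, inl y => @gadj K x y
             | inr x, inr y => @gadj H x y
             | _, _ => false
             end.

Definition vertex_overlap (K H : graph) (f : 'I_(gv K) -> 'I_(gv H) -> bool) : Prop :=
  (forall x y y', f x y -> f x y' -> y = y') /\
  (forall x x' y, f x y -> f x' y -> x = x').

Definition overlap_rel (K H : graph) (f : 'I_(gv K) -> 'I_(gv H) -> bool)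
    (u v : 'I_(gv K + gv H)) : Prop :=
  u = v \/ (exists x y, f x y /\
            ((u = lshift (gv H) x /\ v = rshift (gv K) y) \/
             (v = lshift (gv H) x /\ u = rshift (gv K) y))).

(** * Graph fibrations.  F K a  means (K, a) ∈ F, for a ∈ Z_2^{*V(K)}. *)
Definition fibration := forall K : graph, seq 'I_(gv K) -> Prop.

Definition graph_fibration (F : fibration) : Prop :=
  (* F is a set of pairs (K, a) with a a group element, up to isomorphism *)
  (forall K (a b : seq 'I_(gv K)), geq a b -> F K a -> F K b) /\
  (forall K K' phi, @is_iso K K' phi -> forall a, F K a <-> F K' (map phi a)) /\
  F (edgeless 0) [::] /\ F (edgeless 1) [::] /\
  (forall K, (exists a, F K a) -> normal_subgroup (F K)) /\
  (forall K phi, @is_iso K K phi -> forall a, F K a -> F K (map phi a)) /\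
  (forall K H (a : seq 'I_(gv K)) (b : seq 'I_(gv H)) f, F K a -> F H b ->
     @vertex_overlap K H f ->
     forall (L : graph) (q : 'I_(gv K + gv H) -> 'I_(gv L)),
       is_quotient (@dunion_adj K H) q ->
       (forall u v, q u = q v <-> @overlap_rel K H f u v) ->
       F L (map (fun x => q (lshift (gv H) x)) a ++
            map (fun y => q (rshift (gv K) y)) b)).

Definition easy_graph_fibration (F : fibration) : Prop :=
  graph_fibration F /\
  (forall K, (exists a, F K a) ->
     forall (L : graph) (q : 'I_(gv K) -> 'I_(gv L)), is_quotient (@gadj K) q ->
     forall a, F K a -> F L (map q a)).

Record bgraph (k l : nat) := BGraph
  { bg : graph; bg_in : k.-tuple 'I_(gv bg); bg_out : l.-tuple 'I_(gv bg) }.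

(** The group-theoretical graph category:  (K, a, b) ∈ C  iff
    (K, g_a^{-1} g_b) ∈ F;  g_a^{-1} is represented by rev a. *)
Definition in_category (F : fibration) k l (K : bgraph k l) : Prop :=
  F (bg K) (rev (@bg_in _ _ K) ++ @bg_out _ _ K).

(** Linear maps (C^n)^{⊗k} -> (C^n)^{⊗l}, as arrays indexed by
    multi-indices j : 'I_l -> 'I_n (row) and i : 'I_k -> 'I_n (column). *)
Definition tmap (n k l : nat) := {ffun 'I_l -> 'I_n} -> {ffun 'I_k -> 'I_n} -> CC.

Definition TK (G : graph) k l (K : bgraph k l) : tmap (gv G) k l :=
  fun j i => (#|[set phi : {ffun 'I_(gv (bg K)) -> 'I_(gv G)} |
                 [&& is_hom phi,
                     [forall t, phi (tnth (@bg_in _ _ K) t) == i t] &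
                     [forall t, phi (tnth (@bg_out _ _ K) t) == j t]]]|)%:R.

Definition in_span_TK (F : fibration) (G : graph) k l (T : tmap (gv G) k l) : Prop :=
  exists s : seq (bgraph k l * CC),
    (forall p, List.In p s -> in_category F p.1) /\
    (forall j i, T j i = \sum_(p <- s) p.2 * @TK G k l p.1 j i).

(** * The quantum group  Γ^ ⋊ Aut G,  Γ = Z_2^{*V(G)} / N,  N = F(G).
    Its algebra is  CΓ ⊗ O(Aut G), which we realise as functions
    Aut G -> CΓ (O(H) = C^H), with pointwise product.  Elements of CΓ
    are given by formal sums  Σ c_p γ_{w_p}  (seq (CC * word)); such a
    formal sum is 0 in CΓ iff for every coset w N the coefficients of the
    words in that coset sum to zero (γ_w = γ_w' iff g_w^{-1} g_w' ∈ N). *)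
Definition fsum (V : Type) := seq (CC * seq V).
Definition fs_scale V (c : CC) (x : fsum V) : fsum V := [seq (c * p.1, p.2) | p <- x].
Definition fs_mul V (x y : fsum V) : fsum V := [seq (p.1 * q.1, p.2 ++ q.2) | p <- x, q <- y].
Definition fs_one V : fsum V := [:: (1, [::])].
Definition cg_zero V (N : seq V -> Prop) (x : fsum V) : Prop :=
  forall w : seq V, \sum_(p <- x | `[< N (rev w ++ p.2) >]) p.1 = 0.

Definition in_Aut (G : graph) (s : {perm 'I_(gv G)}) : Prop :=
  forall x y, @gadj G x y = @gadj G (s x) (s y).

(** Fundamental representation  u_ij = γ_i ⊗ v_ij,  v_ij(σ) = δ_{i, σ(j)},
    evaluated at σ. *)
Definition u_entry (G : graph) (i j : 'I_(gv G)) (s : {perm 'I_(gv G)}) : fsum 'I_(gv G) :=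
  [:: ((i == s j)%:R, [:: i])].

Definition utens (G : graph) k (i i' : {ffun 'I_k -> 'I_(gv G)}) (s : {perm 'I_(gv G)}) :
    fsum 'I_(gv G) :=
  foldr (@fs_mul _) (@fs_one _) [seq u_entry (i t) (i' t) s | t <- enum 'I_k].

(** T ∈ Mor(u^{⊗k}, u^{⊗l}) for Γ^ ⋊ Aut G:  T u^{⊗k} = u^{⊗l} T  entrywise
    in CΓ ⊗ O(Aut G), i.e. at every σ ∈ Aut G. *)
Definition is_intertwiner (G : graph) (N : seq 'I_(gv G) -> Prop) k l
    (T : tmap (gv G) k l) : Prop :=
  forall (j : {ffun 'I_l -> 'I_(gv G)}) (i' : {ffun 'I_k -> 'I_(gv G)})
         (s : {perm 'I_(gv G)}), in_Aut s ->
    cg_zero N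
      (flatten [seq fs_scale (T j i) (utens i i' s) | i <- enum {ffun 'I_k -> 'I_(gv G)}]
       ++ fs_scale (-1)
          (flatten [seq fs_scale (T j' i') (utens j j' s) | j' <- enum {ffun 'I_l -> 'I_(gv G)}])).

From Pilot Require Import Defs.
From mathcomp Require Import all_boot all_algebra all_fingroup.
From mathcomp Require Import complex Rstruct boolp.
Set Implicit Arguments. Unset Strict Implicit. Unset Printing Implicit Defensive.
Import GRing.Theory Num.Theory.

(* T intertwines u^{⊗k} and u^{⊗l} of Γ^ ⋊ Aut G iff (i) T commutes with the action of
   Aut G on multi-indices and (ii) T_{j i} ≠ 0 only if g_i^{-1} g_j ∈ F(G).  Every T^G_K with
   K ∈ C has both properties: (i) because Aut G acts on the homomorphisms K → G, and (ii)
   because, gluing K to G by (F3) and folding it onto G by (F4), the image of a word of F(K)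
   under a homomorphism K → G lies in F(G).  Conversely, sorting the homomorphisms K → G by
   their kernels and using (F4), induction on |V(K)| puts the maps counting injective
   homomorphisms K → G in the span for every K ∈ C.  For K = G labelled by (i, j) these count
   the automorphisms moving (i, j) to a given pair of multi-indices, so averaging over Aut G
   writes every T with (i) and (ii) as a combination of them. *)

Section ReducedWords.
Variable V : eqType.

Fixpoint reduced (w : seq V) : bool :=
  if w is x :: ((y :: _) as w') then (x != y) && reduced w' else true.

Lemma push_reduced x w : reduced w -> reduced (push x w).
Proof.
case: w => [|y w] //; rewrite /push; case: eqP => [_|/eqP neq_xy red_yw].
  by case: w => [|z w] //= /andP[].
by rewrite [reduced _]/= neq_xy.
Qed.

Lemma reduce_reduced w : reduced (reduce w).
Proof. by elim: w => //= x w; apply: push_reduced. Qed.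

Lemma push_pushK x w : reduced w -> push x (push x w) = w.
Proof.
case: w => [|y w] /=; first by rewrite eqxx.
case: eqP => [<-|/eqP neq_xy]; last by rewrite /= eqxx.
by case: w => [|z w] //= /andP[/negbTE->].
Qed.

Lemma foldr_push_cat_rev x w : reduced w -> foldr push w (x ++ rev x) = w.
Proof.
elim: x w => [|y x IHx] w red_w //=.
by rewrite rev_cons -cats1 catA foldr_cat /= IHx ?push_pushK ?push_reduced.
Qed.

Lemma geq_cat_rev (u x v : seq V) : Defs.geq (u ++ x ++ rev x ++ v) (u ++ v).
Proof.
rewrite /Defs.geq /reduce (catA x) foldr_cat [foldr _ _ (_ ++ v)]foldr_cat.
by rewrite foldr_push_cat_rev ?foldr_cat ?reduce_reduced.
Qed.

End ReducedWords.

Section Cosets.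
Variables (V : eqType) (N : seq V -> Prop).

Definition word_subgroup := (forall a b, Defs.geq a b -> N a -> N b) /\ normal_subgroup N.

Definition same_coset (a b : seq V) := N (rev a ++ b).

Hypothesis subgroupN : word_subgroup.

Lemma same_coset_refl a : same_coset a a.
Proof.
case: subgroupN => geqN [N0 _ _ _]; apply: geqN N0; rewrite /Defs.geq eq_sym.
by have := geq_cat_rev [::] (rev a) [::]; rewrite revK /= !cats0.
Qed.

Lemma same_coset_sym a b : same_coset a b -> same_coset b a.
Proof. by case: subgroupN => _ [_ _ revN _] /revN; rewrite rev_cat revK. Qed.

Lemma same_coset_trans a b c : same_coset a b -> same_coset b c -> same_coset a c.
Proof.
case: subgroupN => geqN [_ catN _ _] Nab Nbc; apply: geqN (catN _ _ Nab Nbc).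
by rewrite -catA; apply: geq_cat_rev.
Qed.

End Cosets.

Local Open Scope ring_scope.

Section MultiIndices.
Variables n k : nat.
Implicit Types (i j : {ffun 'I_k -> 'I_n}) (s : {perm 'I_n}).

Definition gword i : seq 'I_n := map i (enum 'I_k).

Definition perm_idx s i : {ffun 'I_k -> 'I_n} := [ffun t => s (i t)].

Lemma perm_idxK s : cancel (perm_idx s) (perm_idx s^-1).
Proof. by move=> i; apply/ffunP => t; rewrite !ffunE permK. Qed.

Lemma perm_idxVK s : cancel (perm_idx s^-1) (perm_idx s).
Proof. by move=> i; apply/ffunP => t; rewrite !ffunE permKV. Qed.

Lemma perm_idx1 i : perm_idx 1 i = i.
Proof. by apply/ffunP => t; rewrite ffunE perm1. Qed.

Lemma eq_perm_idxV s i j : (j == perm_idx s i) = (i == perm_idx s^-1 j).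
Proof.
by apply/eqP/eqP => [-> | ->]; rewrite ?perm_idxK ?perm_idxVK.
Qed.

End MultiIndices.

Lemma in_Aut1 (G : graph) : in_Aut (1 : {perm 'I_(gv G)}).
Proof. by move=> x y; rewrite !perm1. Qed.

Lemma in_AutV (G : graph) (s : {perm 'I_(gv G)}) : in_Aut s -> in_Aut s^-1.
Proof. by move=> autS x y; rewrite [RHS]autS !permKV. Qed.

Lemma foldr_fs_mul_delta (V I : Type) (r : seq I) (P : pred I) (x : I -> V) :
  foldr (@fs_mul V) (@fs_one V) [seq [:: ((P t)%:R, [:: x t])] | t <- r] =
  [:: ((all P r)%:R, map x r)].
Proof. by elim: r => //= t r ->; rewrite /fs_mul /=; case: (P t); rewrite ?mul1r ?mul0r. Qed.

Lemma utensE (G : graph) k (i i' : {ffun 'I_k -> 'I_(gv G)}) s :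
  utens i i' s = [:: ((i == perm_idx s i')%:R, gword i)].
Proof.
rewrite /utens /u_entry (foldr_fs_mul_delta _ (fun t => i t == s (i' t))).
congr [:: ((nat_of_bool _)%:R, _)]; apply/allP/eqP => [all_eq | ->]; last first.
  by move=> t; rewrite ffunE.
by apply/ffunP => t; rewrite ffunE; apply/eqP/all_eq; rewrite mem_enum.
Qed.

Lemma sum_fs_scale (V : Type) (P : pred (seq V)) c (x : fsum V) :
  \sum_(p <- fs_scale c x | P p.2) p.1 = c * \sum_(p <- x | P p.2) p.1.
Proof. by rewrite big_map mulr_sumr. Qed.

Lemma sum_enum_delta (I : finType) (c : I) (A : pred I) (f : I -> CC) :
  \sum_(i <- enum I) f i * (if A i then (i == c)%:R else 0) = if A c then f c else 0.
Proof.
rewrite big_enum /= (bigD1 c) //= eqxx big1 ?addr0 => [|i /negbTE->].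
  by case: (A c); rewrite ?mulr1 ?mulr0.
by case: (A i); rewrite mulr0.
Qed.

Section Intertwiners.
Variables (G : graph) (N : seq 'I_(gv G) -> Prop) (k l : nat).
Implicit Type T : tmap (gv G) k l.

Definition aut_invariant T :=
  forall s, in_Aut s -> forall j i, T (perm_idx s j) (perm_idx s i) = T j i.

Definition supported_in T :=
  forall j i, T j i != 0 -> same_coset N (gword i) (gword j).

(* the coefficient of the coset g_w N in (T u^{⊗k} - u^{⊗l} T)_{j i'} at s *)
Lemma intertwiner_coset_coef T j i' s w :
  \sum_(p <- flatten [seq fs_scale (T j i) (utens i i' s) | i <- enum {ffun 'I_k -> 'I_(gv G)}]
       ++ fs_scale (-1)
          (flatten [seq fs_scale (T j' i') (utens j j' s) | j' <- enum {ffun 'I_l -> 'I_(gv G)}])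
     | `[< same_coset N w p.2 >]) p.1 =
  (if `[< same_coset N w (gword (perm_idx s i')) >] then T j (perm_idx s i') else 0) -
  (if `[< same_coset N w (gword j) >] then T (perm_idx s^-1 j) i' else 0).
Proof.
have scaleE := sum_fs_scale (fun w' => `[< same_coset N w w' >]).
rewrite big_cat scaleE mulN1r !big_flatten !big_map.
congr (_ - _).
  rewrite -(sum_enum_delta _ (fun i => `[< same_coset N w (gword i) >])) enumT.
  by apply: eq_bigr => i _; rewrite scaleE utensE big_cons big_nil; case: ifP; rewrite ?addr0.
rewrite -(sum_enum_delta (perm_idx s^-1 j) (fun _ => `[< same_coset N w (gword j) >])
                         (fun j' => T j' i')) enumT.
apply: eq_bigr => j' _; rewrite scaleE utensE big_cons big_nil eq_perm_idxV.
by case: ifP; rewrite ?addr0.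
Qed.

Hypothesis subgroupN : word_subgroup N.

Let self_coset w : `[< same_coset N w w >].
Proof. by apply/asboolP; apply: same_coset_refl. Qed.

Lemma intertwiner_supported T : is_intertwiner N T -> supported_in T.
Proof.
move=> intT j i nzT; apply/asboolP; apply: contraNT nzT => Nij.
have := intT j i 1%g (@in_Aut1 G) (gword i).
by rewrite intertwiner_coset_coef invg1 !perm_idx1 self_coset (negbTE Nij) subr0 => ->.
Qed.

Lemma intertwiner_aut_invariant T : is_intertwiner N T -> aut_invariant T.
Proof.
move=> intT s autS j i; have := intT (perm_idx s j) i s autS (gword (perm_idx s j)).
rewrite intertwiner_coset_coef perm_idxK self_coset.
case: asboolP => [_ /eqP | Nji]; first by rewrite subr_eq0 => /eqP.
rewrite sub0r => /eqP; rewrite oppr_eq0 => /eqP ->; apply/eqP; apply: contraT => nzT.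
by case: Nji; apply: (same_coset_sym subgroupN); apply: intertwiner_supported intT _ _ nzT.
Qed.

Lemma invariant_supported_intertwiner T :
  aut_invariant T -> supported_in T -> is_intertwiner N T.
Proof.
move=> invT suppT j i' s autS w; rewrite /cg_zero intertwiner_coset_coef.
have -> : T (perm_idx s^-1 j) i' = T j (perm_idx s i') by rewrite -(invT s autS) perm_idxVK.
have [-> | nzT] := eqVneq (T j (perm_idx s i')) 0; first by rewrite !if_same subrr.
have Nij := suppT _ _ nzT.
have -> : `[< same_coset N w (gword (perm_idx s i')) >] = `[< same_coset N w (gword j) >].
  apply/asboolP/asboolP => Nw; first exact: same_coset_trans Nw Nij.
  exact: same_coset_trans Nw (same_coset_sym subgroupN Nij).
by rewrite subrr.
Qed.

Lemma intertwinerP T : is_intertwiner N T <-> aut_invariant T /\ supported_in T.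
Proof.
split=> [intT | [invT suppT]]; last exact: invariant_supported_intertwiner.
by split; [apply: intertwiner_aut_invariant | apply: intertwiner_supported].
Qed.

End Intertwiners.

Section Span.
Variables (F : fibration) (G : graph) (k l : nat).
Implicit Type T : tmap (gv G) k l.

Lemma span_ext T T' : (forall j i, T j i = T' j i) -> in_span_TK F T -> in_span_TK F T'.
Proof. by move=> eqT [s [inC TE]]; exists s; split=> // j i; rewrite -eqT TE. Qed.

Lemma span0 : in_span_TK F ((fun _ _ => 0) : tmap (gv G) k l).
Proof. by exists [::]; split=> // j i; rewrite big_nil. Qed.

Lemma span_add T1 T2 :
  in_span_TK F T1 -> in_span_TK F T2 -> in_span_TK F (fun j i => T1 j i + T2 j i).
Proof.
move=> [s1 [inC1 T1E]] [s2 [inC2 T2E]]; exists (s1 ++ s2); split.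
  by move=> p /(List.in_app_or _ _ _) [/inC1 | /inC2].
by move=> j i; rewrite big_cat T1E T2E.
Qed.

Lemma span_scale c T : in_span_TK F T -> in_span_TK F (fun j i => c * T j i).
Proof.
move=> [s [inC TE]]; exists [seq (p.1, c * p.2) | p <- s]; split.
  by move=> p /(List.in_map_iff _ _ _) [q [<- /inC]].
by move=> j i; rewrite TE big_map mulr_sumr; apply: eq_bigr => p _; rewrite mulrA.
Qed.

Lemma span_sum (I : Type) (r : seq I) (P : pred I) (c : I -> CC) (Ts : I -> tmap (gv G) k l) :
  (forall x, P x -> in_span_TK F (Ts x)) ->
  in_span_TK F (fun j i => \sum_(x <- r | P x) c x * Ts x j i).
Proof.
move=> spanTs; elim: r => [|x r IHr]; first by apply: span_ext span0 => j i; rewrite big_nil.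
case Px: (P x); last by apply: span_ext IHr => j i; rewrite big_cons Px.
apply: span_ext (span_add (span_scale (c x) (spanTs x Px)) IHr) => j i.
by rewrite big_cons Px.
Qed.

Lemma TK_in_span (K : bgraph k l) : in_category F K -> in_span_TK F (@TK G _ _ K).
Proof.
by move=> inC; exists [:: (K, 1)]; split=> [p [<-|[]] | j i] //; rewrite big_seq1 mul1r.
Qed.

End Span.

Section HomSets.
Variables (G : graph) (k l : nat) (K : bgraph k l).

Definition homset (j : {ffun 'I_l -> 'I_(gv G)}) (i : {ffun 'I_k -> 'I_(gv G)}) :=
  [set phi : {ffun 'I_(gv (bg K)) -> 'I_(gv G)} |
     [&& is_hom phi, [forall t, phi (tnth (bg_in K) t) == i t]
       & [forall t, phi (tnth (bg_out K) t) == j t]]].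

Lemma TKE j i : @TK G _ _ K j i = #|homset j i|%:R.
Proof. by []. Qed.

End HomSets.

Lemma map_labels_gword (T : Type) n m (a : m.-tuple T) (phi : T -> 'I_n)
    (i : {ffun 'I_m -> 'I_n}) :
  [forall t, phi (tnth a t) == i t] -> map phi a = gword i.
Proof.
move=> /forallP phi_a; rewrite -[in LHS](map_tnth_enum a) -map_comp.
by apply: eq_map => t; apply/eqP/phi_a.
Qed.

Lemma is_hom_perm (K G : graph) (s : {perm 'I_(gv G)}) (phi : {ffun 'I_(gv K) -> 'I_(gv G)}) :
  in_Aut s -> is_hom [ffun x => s (phi x)] = is_hom phi.
Proof.
by move=> autS; apply: eq_forallb => x; apply: eq_forallb => y; rewrite !ffunE -autS.
Qed.

Lemma homset_perm (G : graph) k l (K : bgraph k l) (s : {perm 'I_(gv G)})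
    (j : {ffun 'I_l -> 'I_(gv G)}) (i : {ffun 'I_k -> 'I_(gv G)}) : in_Aut s ->
  homset K (perm_idx s j) (perm_idx s i) =
  [set [ffun x => s (phi x)] | phi : {ffun 'I_(gv (bg K)) -> 'I_(gv G)} in homset K j i].
Proof.
move=> autS; apply/setP => psi; rewrite inE; apply/and3P/imsetP.
  case=> hom_psi /forallP psi_in /forallP psi_out; exists [ffun x => (s^-1)%g (psi x)].
    rewrite inE is_hom_perm ?hom_psi /=; last exact: in_AutV.
    apply/andP; split; apply/forallP => t.
      by rewrite ffunE (eqP (psi_in t)) ffunE permK.
    by rewrite ffunE (eqP (psi_out t)) ffunE permK.
  by apply/ffunP => x; rewrite !ffunE permKV.
case=> phi; rewrite inE => /and3P [hom_phi /forallP phi_in /forallP phi_out] ->.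
split; first by rewrite is_hom_perm.
  by apply/forallP => t; rewrite !ffunE (eqP (phi_in t)).
by apply/forallP => t; rewrite !ffunE (eqP (phi_out t)).
Qed.

Lemma TK_aut_invariant (G : graph) k l (K : bgraph k l) : aut_invariant (@TK G _ _ K).
Proof.
move=> s autS j i; rewrite !TKE homset_perm // card_imset // => phi psi /ffunP eq_s.
by apply/ffunP => x; have := eq_s x; rewrite !ffunE => /perm_inj.
Qed.

Lemma fibration_word_subgroup (F : fibration) (K : graph) :
  graph_fibration F -> (exists a, F K a) -> word_subgroup (F K).
Proof. by case=> geqF [_ [_ [_ [F1 _]]]] FK; split; [apply: geqF | apply: F1]. Qed.

Lemma dunion_sym (K H : graph) : symmetric (@dunion_adj K H).
Proof.
by move=> u v; rewrite /dunion_adj; case: (split u) => x; case: (split v) => y //; apply: gsym.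
Qed.

Definition dunion (K H : graph) : graph := Graph (@dunion_sym K H).

Lemma is_quotient_id (L : graph) : is_quotient (@gadj L) id.
Proof.
split=> [i | i j]; first by exists i.
apply/idP/existsP => [adj_ij | [x /existsP [y /and3P [/eqP-> /eqP-> //]]]].
by exists i; apply/existsP; exists j; rewrite !eqxx.
Qed.

Lemma F_dunion_left (F : fibration) (K H : graph) (a : seq 'I_(gv K)) :
  graph_fibration F -> F K a -> F H [::] -> F (dunion K H) (map (lshift (gv H)) a).
Proof.
move=> [_ [_ [_ [_ [_ [_ F3]]]]]] FKa FH0; rewrite -[map _ a]cats0.
apply: (F3 K H a [::] (fun _ _ => false) FKa FH0 _ (dunion K H) id (is_quotient_id _)) => // u v.
by split=> [->|[|[x [y []]]]] //; apply: or_introl.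
Qed.

Definition copair (K H : graph) (phi : 'I_(gv K) -> 'I_(gv H)) (u : 'I_(gv K + gv H)) :=
  match split u with inl x => phi x | inr y => y end.

Lemma is_quotient_copair (K H : graph) (phi : {ffun 'I_(gv K) -> 'I_(gv H)}) :
  is_hom phi -> is_quotient (@dunion_adj K H) (copair phi).
Proof.
move=> /forallP hom_phi; split=> [y | i j].
  by exists (rshift (gv K) y); rewrite /copair (unsplitK (inr _ y)).
apply/idP/existsP => [adj_ij | [u /existsP [v /and3P [/eqP<- /eqP<-]]]].
  exists (rshift (gv K) i); apply/existsP; exists (rshift (gv K) j).
  by rewrite /copair /dunion_adj !(unsplitK (inr _ _)) !eqxx.
rewrite /copair /dunion_adj; case: (split u) => x; case: (split v) => y //.
by apply/implyP; move/forallP: (hom_phi x).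
Qed.

(* glue K to H along nothing by (F3), then fold K onto H along phi by (F4) *)
Lemma F_hom_image (F : fibration) (K H : graph) (a : seq 'I_(gv K))
    (phi : {ffun 'I_(gv K) -> 'I_(gv H)}) :
  easy_graph_fibration F -> (exists b, F H b) -> F K a -> is_hom phi -> F H (map phi a).
Proof.
move=> [fibF F4] FH FKa hom_phi.
have [_ [FH0 _ _ _]] := fibration_word_subgroup fibF FH.
have FKH := F_dunion_left fibF FKa FH0.
have := F4 _ (ex_intro _ _ FKH) H _ (is_quotient_copair hom_phi) _ FKH.
by rewrite -map_comp; congr (F H _); apply: eq_map => x; rewrite /= /copair (unsplitK (inl _ x)).
Qed.

Lemma TK_supported (F : fibration) (G : graph) k l (K : bgraph k l) :
  easy_graph_fibration F -> (exists a, F G a) -> in_category F K ->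
  supported_in (F G) (@TK G _ _ K).
Proof.
move=> easyF FG inC j i; rewrite TKE pnatr_eq0 -lt0n => /card_gt0P [phi].
rewrite inE => /and3P [hom_phi phi_in phi_out].
have := F_hom_image easyF FG inC hom_phi.
by rewrite map_cat map_rev (map_labels_gword phi_in) (map_labels_gword phi_out).
Qed.

Lemma sum_neq0_In (R : zmodType) (I : Type) (r : seq I) (f : I -> R) :
  \sum_(x <- r) f x != 0 -> exists2 x, List.In x r & f x != 0.
Proof.
elim: r => [|x r IHr]; first by rewrite big_nil eqxx.
rewrite big_cons; have [fx0 | nz_fx _] := eqVneq (f x) 0; last by exists x; first left.
by rewrite fx0 add0r => /IHr [y ry nz_fy]; exists y; first right.
Qed.

Lemma span_invariant_supported (F : fibration) (G : graph) k l (T : tmap (gv G) k l) :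
  easy_graph_fibration F -> (exists a, F G a) -> in_span_TK F T ->
  aut_invariant T /\ supported_in (F G) T.
Proof.
move=> easyF FG [s [inC TE]]; split=> [g autG j i | j i].
  by rewrite !TE; apply: eq_bigr => p _; rewrite TK_aut_invariant.
rewrite TE => /sum_neq0_In [[K c] /inC inC_K]; rewrite mulf_eq0 negb_or => /andP [_].
exact: TK_supported.
Qed.

Section QuotientGraph.
Variables (K : graph) (T : finType) (f : 'I_(gv K) -> T).

Definition quot_vertex (x : 'I_(gv K)) : 'I_#|f @: [set: 'I_(gv K)]| :=
  enum_rank_in (imset_f f (in_setT x)) (f x).

Lemma quot_vertexK x : enum_val (quot_vertex x) = f x.
Proof. by apply: enum_rankK_in; apply: imset_f. Qed.

Lemma eq_quot_vertex x y : (quot_vertex x == quot_vertex y) = (f x == f y).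
Proof.
apply/eqP/eqP => [eq_q | eq_f]; first by rewrite -!quot_vertexK eq_q.
by apply: enum_val_inj; rewrite !quot_vertexK.
Qed.

Lemma quot_vertex_surj u : exists x, quot_vertex x = u.
Proof.
have /imsetP [x _ fx] := enum_valP u; exists x.
by apply: enum_val_inj; rewrite quot_vertexK.
Qed.

Definition quot_adj : rel 'I_#|f @: [set: 'I_(gv K)]| :=
  fun u v => [exists x, exists y, [&& quot_vertex x == u, quot_vertex y == v & gadj x y]].

Lemma quot_adj_sym : symmetric quot_adj.
Proof.
suff imp u v : quot_adj u v -> quot_adj v u by move=> u v; apply/idP/idP; apply: imp.
case/existsP => x /existsP [y /and3P [qx qy adj_xy]].
by apply/existsP; exists y; apply/existsP; exists x; rewrite qx qy gsym adj_xy.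
Qed.

Definition quot_graph : graph := Graph quot_adj_sym.

Lemma quot_graph_is_quotient :
  is_quotient (@gadj K) (quot_vertex : 'I_(gv K) -> 'I_(gv quot_graph)).
Proof. by split; [apply: quot_vertex_surj | move=> u v]. Qed.

Lemma quot_graph_lt : ~~ injectiveb f -> (gv quot_graph < gv K)%N.
Proof.
move=> not_inj; rewrite /= -[X in (_ < X)%N]card_ord -cardsT ltn_neqAle leq_imset_card andbT.
apply: contra not_inj => /imset_injP f_inj; apply/injectiveP => x y.
by apply: f_inj; rewrite inE.
Qed.

Lemma is_hom_comp_quot (G : graph) (psi : {ffun 'I_(gv quot_graph) -> 'I_(gv G)}) :
  is_hom [ffun x => psi (quot_vertex x)] = is_hom psi.
Proof.
apply/forallP/forallP => hom_psi u.
  apply/forallP => v; apply/implyP => /existsP [x /existsP [y /and3P [/eqP<- /eqP<- adj_xy]]].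
  by have /forallP/(_ y)/implyP := hom_psi x; rewrite !ffunE; apply.
apply/forallP => y; apply/implyP => adj_uy; rewrite !ffunE.
have /forallP/(_ (quot_vertex y))/implyP := hom_psi (quot_vertex u); apply.
by apply/existsP; exists u; apply/existsP; exists y; rewrite !eqxx.
Qed.

End QuotientGraph.

Lemma factor_surj_inj (A B C : finType) (q : A -> B) (phi : A -> C) :
  (forall b, exists a, q a = b) -> (forall x y, (phi x == phi y) = (q x == q y)) ->
  exists2 psi : {ffun B -> C}, injective psi & forall x, psi (q x) = phi x.
Proof.
move=> q_surj eq_phi.
have q_surjb b : exists a, q a == b by have [a <-] := q_surj b; exists a.
pose psi := [ffun b => phi (xchoose (q_surjb b))].
have psi_q x : psi (q x) = phi x by rewrite ffunE; apply/eqP; rewrite eq_phi (xchooseP (q_surjb _)).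
exists psi => // u v; have [x <-] := q_surj u; have [y <-] := q_surj v.
by rewrite !psi_q => /eqP; rewrite eq_phi => /eqP.
Qed.

(* a partition of V(K) is encoded by the map sending each vertex to its block *)
Definition kern m n (phi : {ffun 'I_m -> 'I_n}) : {ffun 'I_m -> {set 'I_m}} :=
  [ffun x => [set y | phi y == phi x]].

Lemma eq_kern m n (phi : {ffun 'I_m -> 'I_n}) x y : (kern phi x == kern phi y) = (phi x == phi y).
Proof.
apply/eqP/eqP => [eq_k | eq_phi]; last by rewrite !ffunE; apply/setP => z; rewrite !inE eq_phi.
have : x \in kern phi x by rewrite ffunE inE.
by rewrite eq_k ffunE inE => /eqP.
Qed.

Lemma injectiveb_kern m n (phi : {ffun 'I_m -> 'I_n}) : injectiveb (kern phi) = injectiveb phi.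
Proof.
apply/injectiveP/injectiveP => inj x y /eqP; first by rewrite -eq_kern => /eqP /inj.
by rewrite eq_kern => /eqP /inj.
Qed.

Definition quot_bgraph k l (K : bgraph k l) (kap : {ffun 'I_(gv (bg K)) -> {set 'I_(gv (bg K))}}) :=
  @BGraph k l (quot_graph kap)
    (map_tuple (quot_vertex kap) (bg_in K)) (map_tuple (quot_vertex kap) (bg_out K)).
Arguments quot_bgraph {k l} K kap.

Section InjectiveHoms.
Variables (G : graph) (k l : nat).
Implicit Types (K : bgraph k l) (j : {ffun 'I_l -> 'I_(gv G)}) (i : {ffun 'I_k -> 'I_(gv G)}).

Definition injset K j i := [set phi in homset K j i | injectiveb phi].

Definition TKinj K : tmap (gv G) k l := fun j i => #|injset K j i|%:R.

Lemma homset_quot K kap (psi : {ffun 'I_(gv (bg (quot_bgraph K kap))) -> 'I_(gv G)}) j i :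
  ([ffun x => psi (quot_vertex kap x)] \in homset K j i) = (psi \in homset (quot_bgraph K kap) j i).
Proof.
rewrite !inE is_hom_comp_quot; congr [&& _, _ & _]; apply: eq_forallb => t.
  by rewrite ffunE tnth_map.
by rewrite ffunE tnth_map.
Qed.

Lemma card_homset_kern K (phi0 : {ffun 'I_(gv (bg K)) -> 'I_(gv G)}) j i :
  #|[set phi in homset K j i | kern phi == kern phi0]| =
  #|injset (quot_bgraph K (kern phi0)) j i|.
Proof.
set q := quot_vertex (kern phi0).
pose comp_q (psi : {ffun 'I_(gv (bg (quot_bgraph K (kern phi0)))) -> 'I_(gv G)}) :
  {ffun 'I_(gv (bg K)) -> 'I_(gv G)} := [ffun x => psi (q x)].
have comp_q_inj : injective comp_q.
  move=> psi1 psi2 /ffunP eq_psi; apply/ffunP => u; have [x <-] := quot_vertex_surj u.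
  by have := eq_psi x; rewrite !ffunE.
rewrite -(card_imset _ comp_q_inj); apply: eq_card => phi; rewrite [phi \in _]inE.
apply/andP/imsetP => [[hom_phi /eqP kern_phi] | [psi]].
  have [|psi psi_inj psi_q] := @factor_surj_inj _ _ _ q phi (@quot_vertex_surj _ _ _).
    by move=> x y; rewrite eq_quot_vertex -kern_phi !eq_kern.
  have phiE : phi = comp_q psi by apply/ffunP => x; rewrite ffunE psi_q.
  by exists psi; rewrite // inE -homset_quot -/(comp_q psi) -phiE hom_phi; apply/injectiveP.
rewrite inE -homset_quot => /andP [hom_psi /injectiveP psi_inj] ->; split=> //.
apply/eqP/ffunP => x; apply/setP => y; rewrite /comp_q !ffunE !inE ffunE (inj_eq psi_inj).
by rewrite eq_quot_vertex eq_kern.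
Qed.

Definition nontrivial_kernels K :=
  [set kern phi | phi in [set phi : {ffun 'I_(gv (bg K)) -> 'I_(gv G)} | ~~ injectiveb phi]].

Lemma card_homset_by_kernel K j i :
  #|homset K j i| = (#|injset K j i| +
     \sum_(kap in nontrivial_kernels K) #|[set phi in homset K j i | kern phi == kap]|)%N.
Proof.
pose inj := [pred phi : {ffun 'I_(gv (bg K)) -> 'I_(gv G)} | injectiveb phi].
rewrite -(cardID inj (homset K j i)); congr (_ + _)%N.
  by apply: eq_card => phi; rewrite !inE.
rewrite -sum1_card (partition_big (@kern _ _) (mem (nontrivial_kernels K))) => [|phi].
  apply: eq_bigr => kap /imsetP [phi0]; rewrite inE => not_inj0 ->.
  rewrite -sum1_card; apply: eq_bigl => phi; rewrite !inE.
  have [/eqP eq_k | _] := boolP (kern phi == kern phi0); last by rewrite !andbF.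
  by rewrite -injectiveb_kern eq_k injectiveb_kern not_inj0 !andbT.
by rewrite !inE => /andP [not_inj _]; apply/imsetP; exists phi; rewrite ?inE.
Qed.

Lemma TK_by_kernel K j i :
  TK K j i = TKinj K j i + \sum_(kap in nontrivial_kernels K) TKinj (quot_bgraph K kap) j i.
Proof.
rewrite TKE card_homset_by_kernel natrD natr_sum; congr (_ + _).
by apply: eq_bigr => kap /imsetP [phi0 _ ->]; rewrite card_homset_kern.
Qed.

End InjectiveHoms.

Lemma TKinj_in_span (F : fibration) (G : graph) k l (K : bgraph k l) :
  easy_graph_fibration F -> in_category F K -> in_span_TK F (@TKinj G k l K).
Proof.
move=> easyF; have [m] := ubnP (gv (bg K)); elim: m K => // m IHm K /ltnSE small_K inC.
pose T : tmap (gv G) k l := fun j i =>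
  TK K j i + \sum_(kap in nontrivial_kernels G K) (-1) * TKinj (quot_bgraph K kap) j i.
apply: (span_ext (T := T)).
  move=> j i; rewrite /T TK_by_kernel -addrA -big_split big1 ?addr0 // => kap _.
  by rewrite mulN1r; apply: subrr.
apply: span_add (TK_in_span G inC) _; apply: span_sum => kap /imsetP [phi].
rewrite inE -injectiveb_kern => not_inj ->; apply: IHm.
  exact: leq_trans (quot_graph_lt not_inj) small_K.
have := easyF.2 _ (ex_intro (F (bg K)) _ inC) _ _ (quot_graph_is_quotient (kern phi)) _ inC.
by rewrite map_cat map_rev.
Qed.

(* an injective map on the finite edge set maps it onto itself *)
Lemma in_Aut_inj_hom (G : graph) (phi : {ffun 'I_(gv G) -> 'I_(gv G)}) (phi_inj : injective phi) :
  is_hom phi -> in_Aut (perm phi_inj).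
Proof.
move=> /forallP hom_phi x y; rewrite !permE.
pose E := [set p : 'I_(gv G) * 'I_(gv G) | gadj p.1 p.2].
pose phi2 (p : 'I_(gv G) * 'I_(gv G)) := (phi p.1, phi p.2).
have phi2_inj : injective phi2 by move=> [a b] [c d] [/phi_inj-> /phi_inj->].
have phi2E : phi2 @: E = E.
  apply/eqP; rewrite eqEcard (card_imset _ phi2_inj) leqnn andbT.
  apply/subsetP => p /imsetP [[a b]]; rewrite !inE /= => adj_ab ->.
  by have /forallP/(_ b)/implyP := hom_phi a; apply.
apply/idP/idP => [adj_xy | adj_phi]; first by have /forallP/(_ y)/implyP := hom_phi x; apply.
have : (phi x, phi y) \in phi2 @: E by rewrite phi2E inE.
by case/imsetP => [[a b]]; rewrite inE => adj_ab [/phi_inj-> /phi_inj->].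
Qed.

Lemma forall_eq_perm_idx n k (s : {perm 'I_n}) (f : 'I_n -> 'I_n) (i0 i : {ffun 'I_k -> 'I_n}) :
  s =1 f -> [forall t, f (i0 t) == i t] = (i0 == perm_idx s^-1 i).
Proof.
move=> sf; rewrite -eq_perm_idxV eq_sym; apply/forallP/eqP => [eq_f | <- t].
  by apply/ffunP => t; rewrite ffunE sf; apply/eqP/eq_f.
by rewrite ffunE sf.
Qed.

Section Averaging.
Variables (G : graph) (k l : nat).

Definition labelled_graph (i0 : {ffun 'I_k -> 'I_(gv G)}) (j0 : {ffun 'I_l -> 'I_(gv G)}) :=
  @BGraph k l G [tuple i0 t | t < k] [tuple j0 t | t < l].

Definition inj_endos := [set phi : {ffun 'I_(gv G) -> 'I_(gv G)} | is_hom phi && injectiveb phi].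

Lemma TKinj_labelled i0 j0 j i :
  TKinj (labelled_graph i0 j0) j i =
  \sum_(phi in inj_endos) ([forall t, phi (i0 t) == i t] && [forall t, phi (j0 t) == j t])%:R.
Proof.
rewrite /TKinj -sum1_card natr_sum big_mkcond [RHS]big_mkcond /=.
apply: eq_bigr => phi _.
have labelE m (f g : {ffun 'I_m -> 'I_(gv G)}) :
  [forall t, phi (tnth [tuple f t | t < m] t) == g t] = [forall t, phi (f t) == g t].
  by apply: eq_forallb => t; rewrite tnth_mktuple.
rewrite !inE /= !labelE.
by case: (is_hom phi); case: (injectiveb phi); case: [forall t, _]; case: [forall t, _].
Qed.

(* each injective endomorphism, i.e. automorphism, contributes T j i once *)
Lemma sum_TKinj_labelled (T : tmap (gv G) k l) j i : aut_invariant T ->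
  \sum_(x : {ffun 'I_l -> 'I_(gv G)} * {ffun 'I_k -> 'I_(gv G)})
     T x.1 x.2 * TKinj (labelled_graph x.2 x.1) j i = #|inj_endos|%:R * T j i.
Proof.
move=> invT; under eq_bigr => x _ do rewrite TKinj_labelled mulr_sumr.
rewrite exchange_big /= -sum1_card natr_sum mulr_suml.
apply: eq_bigr => phi; rewrite inE => /andP [hom_phi /injectiveP phi_inj].
have autS := in_Aut_inj_hom phi_inj hom_phi.
have labelE := forall_eq_perm_idx _ _ (permE phi_inj).
under eq_bigr => x _ do rewrite !labelE.
rewrite (bigD1 (perm_idx (perm phi_inj)^-1 j, perm_idx (perm phi_inj)^-1 i)) //= !eqxx.
rewrite big1 => [|[j0 i0] /=]; first by rewrite addr0 mul1r (invT _ (in_AutV autS)); apply: mulr1.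
by rewrite xpair_eqE andbC; case: (_ && _) => // _; apply: mulr0.
Qed.

End Averaging.

Lemma invariant_supported_in_span (F : fibration) (G : graph) k l (T : tmap (gv G) k l) :
  easy_graph_fibration F -> aut_invariant T -> supported_in (F G) T -> in_span_TK F T.
Proof.
move=> easyF invT suppT.
have endos_neq0 : #|inj_endos G|%:R != 0 :> CC.
  rewrite pnatr_eq0 -lt0n; apply/card_gt0P; exists [ffun x => x].
  rewrite inE; apply/andP; split; last by apply/injectiveP => x y; rewrite !ffunE.
  by apply/forallP => x; apply/forallP => y; rewrite !ffunE; apply/implyP.
pose c (x : {ffun 'I_l -> 'I_(gv G)} * {ffun 'I_k -> 'I_(gv G)}) := T x.1 x.2 / #|inj_endos G|%:R.
apply: (span_ext _ (@span_sum F G k l _ (index_enum _) (fun x => T x.1 x.2 != 0) c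
                     (fun x => TKinj (labelled_graph x.2 x.1)) _)) => [j i | [j0 i0] /= nzT].
  rewrite -[RHS](mulKf endos_neq0) -sum_TKinj_labelled // mulr_sumr big_mkcond /=.
  apply: eq_bigr => x _; rewrite /c mulrCA mulrA; case: eqP => [-> | _]; first by rewrite !mul0r.
  by rewrite mulrC.
by apply: TKinj_in_span easyF _; apply: suppT.
Qed.

Theorem theorem4p1 (G : graph) (F : fibration) :
  easy_graph_fibration F ->
  (exists a, F G a) ->
  forall (k l : nat) (T : tmap (gv G) k l),
    is_intertwiner (F G) T <-> in_span_TK F T.
Proof.
move=> easyF FG k l T.
rewrite intertwinerP; last exact: fibration_word_subgroup easyF.1 FG.
split=> [[invT suppT] | spanT].
  exact: invariant_supported_in_span easyF invT suppT.
exact: span_invariant_supported easyF FG spanT.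
Qed.
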